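(* Let $\mathcal H$ be a two-dimensional real Hilbert space, $k\ge 2$, and let $T\in\mathcal L_s(^k\mathcal H)$ have norm one and attain its norm at $(\mathbf{x}_1,\ldots,\mathbf{x}_k)$, where $\mathbf{x}_1,\ldots,\mathbf{x}_k$ are norm one vectors with $\operatorname{span}\{\mathbf{x}_1,\ldots,\mathbf{x}_k\}=\mathcal H$. Then $T$ is an exposed point of the unit ball of $\mathcal L_s(^k\mathcal H)$.
   Context: $\mathcal L_s(^k\mathcal H)$ is the Banach space of symmetric $k$-linear forms on $\mathcal H$ with norm $\|T\|=\sup\{|T(\mathbf{w}_1,\ldots,\mathbf{w}_k)|:\|\mathbf{w}_i\|\le1\}$. $T$ attains its norm at $(\mathbf{x}_1,\ldots,\mathbf{x}_k)$ if $|T(\mathbf{x}_1,\ldots,\mathbf{x}_k)|=\|T\|$. A point $T$ of the unit ball $B$ of a Banach space $X$ is exposed if there is a continuous linear functional $\varphi$ on $X$ with $\varphi(T)>\varphi(S)$ for all $S\in B\setminus\{T\}$ (equivalently, $\varphi$ attains its maximum over $B$ only at $T$). *)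

From HB Require Import structures.
From mathcomp Require Import all_boot all_order all_algebra all_fingroup.
From mathcomp Require Import all_classical all_reals.
Set Implicit Arguments. Unset Strict Implicit. Unset Printing Implicit Defensive.
Import Order.TTheory GRing.Theory Num.Theory.
Local Open Scope ring_scope.
Local Open Scope classical_set_scope.

(* The two-dimensional real Hilbert space H is modelled as 'rV[R]_2 with the
   Euclidean inner product <u,v> = (u *m v^T) 0 0. *)
Definition inner (R : realType) (u v : 'rV[R]_2) : R := (u *m v^T) 0 0.
Definition vnorm (R : realType) (v : 'rV[R]_2) : R := Num.sqrt (inner v v).

Definition kform (R : realType) (k : nat) := ('I_k -> 'rV[R]_2) -> R.

Definition upd (R : realType) (k : nat) (x : 'I_k -> 'rV[R]_2) (i : 'I_k)
  (v : 'rV[R]_2) : 'I_k -> 'rV[R]_2 := fun j => if j == i then v else x j.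

Definition multilinear (R : realType) (k : nat) (T : kform R k) : Prop :=
  forall (x : 'I_k -> 'rV[R]_2) (i : 'I_k) (a : R) (u v : 'rV[R]_2),
    T (upd x i (a *: u + v)) = a * T (upd x i u) + T (upd x i v).

Definition symmetric_form (R : realType) (k : nat) (T : kform R k) : Prop :=
  forall (s : 'S_k) (x : 'I_k -> 'rV[R]_2), T (fun i => x (s i)) = T x.

Definition Ls (R : realType) (k : nat) (T : kform R k) : Prop :=
  multilinear T /\ symmetric_form T.

Definition unit_tuples (R : realType) (k : nat) : set ('I_k -> 'rV[R]_2) :=
  [set x | forall i, vnorm (x i) <= 1].

Definition formnorm (R : realType) (k : nat) (T : kform R k) : R :=
  sup [set `|T x| | x in @unit_tuples R k].

Definition attains_norm_at (R : realType) (k : nat) (T : kform R k)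
  (x : 'I_k -> 'rV[R]_2) : Prop := `|T x| = formnorm T.

(* T is an exposed point of the unit ball B of L_s(^k H): there is a continuous
   (= bounded) linear functional phi on L_s(^k H) with phi T > phi S for all
   S in B \ {T}. *)
Definition exposed_point (R : realType) (k : nat) (T : kform R k) : Prop :=
  Ls T /\ formnorm T <= 1 /\
  exists phi : kform R k -> R,
    (forall (a b : R) (S S' : kform R k), Ls S -> Ls S' ->
        phi (fun x => a * S x + b * S' x) = a * phi S + b * phi S') /\
    (exists C : R, forall S : kform R k, Ls S -> `|phi S| <= C * formnorm S) /\
    (forall S : kform R k, Ls S -> formnorm S <= 1 -> S <> T -> phi S < phi T).

From Pilot Require Import Defs.
From mathcomp Require Import all_boot all_order all_algebra all_fingroup.
From mathcomp Require Import all_classical all_reals.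
From mathcomp Require Import ring lra.
Import Order.TTheory GRing.Theory Num.Theory.
Local Open Scope ring_scope.
Set Implicit Arguments. Unset Strict Implicit.

(* Read the plane as C. With eps := T(x) = +-1, the functional
   S |-> eps S(x) exposes T: it suffices that a symmetric form S of norm at
   most 1 with S(x) = 1 is determined by x. Since a functional of norm at most
   1 taking the value 1 at a unit vector y is <., y>, S(x with slot i set to v)
   = <v, x_i>. If x_i, x_j are independent, linearity in slot i and symmetry
   then give S(x with slots i, j set to u, v) = <v, x_i x_j conj(u)>; so for
   |u| = 1 replacing (x_i, x_j) by (u, x_i x_j conj(u)) gives another tuple at
   which S equals 1. Two such moves bring any further slot to any unit vector
   while keeping an independent pair, and multilinearity does the rest. *)

Section Plane.
Variable R : realType.
Implicit Types (s t : R) (a b u v w : 'rV[R]_2).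

Definition re v : R := v ord0 ord0.
Definition im v : R := v ord0 ord_max.
Definition cplx s t : 'rV[R]_2 := \row_(j < 2) if j == ord0 then s else t.

Lemma re_cplx s t : re (cplx s t) = s. Proof. by rewrite /re mxE. Qed.
Lemma im_cplx s t : im (cplx s t) = t. Proof. by rewrite /im mxE. Qed.
Lemma reD u v : re (u + v) = re u + re v. Proof. by rewrite /re mxE. Qed.
Lemma imD u v : im (u + v) = im u + im v. Proof. by rewrite /im mxE. Qed.
Lemma reZ s v : re (s *: v) = s * re v. Proof. by rewrite /re mxE. Qed.
Lemma imZ s v : im (s *: v) = s * im v. Proof. by rewrite /im mxE. Qed.

Definition cplxE := (re_cplx, im_cplx, reD, imD, reZ, imZ).

Lemma cplx_eta v : v = cplx (re v) (im v).
Proof.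
apply/rowP => j; rewrite /cplx mxE /re /im.
by case: j => [[|[|//]]] hj /=; congr (v _ _); apply/val_inj.
Qed.

Lemma row2P u v : re u = re v -> im u = im v -> u = v.
Proof. by move=> hre him; rewrite (cplx_eta u) (cplx_eta v) hre him. Qed.

Definition e1 := cplx 1 0.
Definition e2 := cplx 0 1.

Lemma cplx_basis v : v = re v *: e1 + im v *: e2.
Proof. by apply: row2P; rewrite !cplxE; ring. Qed.

Lemma innerE u v : inner u v = re u * re v + im u * im v.
Proof.
rewrite /inner mxE big_ord_recr big_ord1 /= !mxE /re /im.
by congr (_ * _ + _ * _); congr (_ _ _); apply/val_inj.
Qed.

Definition sqnorm v := re v ^+ 2 + im v ^+ 2.

Lemma sqnorm_ge0 v : 0 <= sqnorm v.
Proof. by rewrite /sqnorm addr_ge0 ?sqr_ge0. Qed.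

Lemma inner_sqnorm v : inner v v = sqnorm v.
Proof. by rewrite innerE /sqnorm !expr2. Qed.

Lemma vnorm_le1 v : (vnorm v <= 1) = (sqnorm v <= 1).
Proof. by rewrite /vnorm inner_sqnorm -{1}sqrtr1 ler_sqrt. Qed.

Lemma vnorm_eq1 v : vnorm v = 1 -> sqnorm v = 1.
Proof.
move=> h; have := sqr_sqrtr (sqnorm_ge0 v).
by rewrite -inner_sqnorm -/(vnorm v) h expr1n.
Qed.

Definition cmul a b :=
  cplx (re a * re b - im a * im b) (re a * im b + im a * re b).
Definition cconj a := cplx (re a) (- im a).
Definition cross a b := re a * im b - im a * re b.

Lemma sqnorm_cmul a b : sqnorm (cmul a b) = sqnorm a * sqnorm b.
Proof. by rewrite /sqnorm !cplxE; ring. Qed.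

Lemma sqnorm_cconj a : sqnorm (cconj a) = sqnorm a.
Proof. by rewrite /sqnorm !cplxE; ring. Qed.

Lemma cross_cmulr a u : cross a (cmul u a) = im u * sqnorm a.
Proof. by rewrite /cross /sqnorm !cplxE; ring. Qed.

Lemma cross_coord a b u : cross a b != 0 ->
  u = (cross u b / cross a b) *: a + (cross a u / cross a b) *: b.
Proof. by move=> ab; apply: row2P; rewrite !cplxE /cross; field. Qed.

Lemma cmul_cconj_comb a b s t :
  cmul (cmul a b) (cconj (s *: a + t *: b)) =
  (s * sqnorm a) *: b + (t * sqnorm b) *: a.
Proof. by apply: row2P; rewrite /sqnorm !cplxE; ring. Qed.

Lemma inner_combr v a b s t :
  inner v (s *: a + t *: b) = s * inner v a + t * inner v b.
Proof. by rewrite !innerE !cplxE; ring. Qed.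

(* The test vector is (y + d/2)/(1 + |d|^2/4) with d = w - y: it lies in the
   unit disc but pairs with w to (1 + |d|^2/2)/(1 + |d|^2/4). *)
Lemma unit_dual_eq y w : sqnorm y = 1 -> inner y w = 1 ->
  (forall v, sqnorm v <= 1 -> inner v w <= 1) -> w = y.
Proof.
rewrite innerE /sqnorm => y1 yw le_w.
set d0 := re w - re y; set d1 := im w - im y; set D := d0 ^+ 2 + d1 ^+ 2.
have D_ge0 : 0 <= D by rewrite /D; nra.
have yd : re y * d0 + im y * d1 = 0 by rewrite /d0 /d1; nra.
set c := (1 + D / 4)^-1.
have c_gt0 : 0 < c by rewrite invr_gt0; lra.
have cE : c * (1 + D / 4) = 1 by rewrite mulVf // gt_eqF //; lra.
have := le_w (cplx (c * (re y + d0 / 2)) (c * (im y + d1 / 2))).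
rewrite innerE /sqnorm !cplxE.
have -> : (c * (re y + d0 / 2)) ^+ 2 + (c * (im y + d1 / 2)) ^+ 2 =
          c * (c * (1 + D / 4)) by rewrite /D; nra.
have -> : c * (re y + d0 / 2) * re w + c * (im y + d1 / 2) * im w =
          c * (1 + D / 2) by rewrite /D /d0 /d1 in yd *; nra.
rewrite cE mulr1 => /(_ ltac:(nra)) hD.
have {}hD : D <= 0 by nra.
have [/eqP + /eqP] : d0 = 0 /\ d1 = 0 by split; rewrite /D in hD; nra.
by rewrite !subr_eq0 => /eqP hre /eqP him; apply: row2P.
Qed.

(* In complex notation the cross product below is Im(conj(mu)^2 W) for the
   unit W = conj(a)^3 b c d: mu = i works unless W is real, and then
   mu = (3 + 4i)/5 does. *)
Lemma exists_twist a b c d :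
  sqnorm a = 1 -> sqnorm b = 1 -> sqnorm c = 1 -> sqnorm d = 1 ->
  exists mu, [/\ sqnorm mu = 1, im mu != 0 &
    cross (cmul (cmul a (cmul mu a)) (cconj b))
          (cmul (cmul c d) (cconj (cmul mu a))) != 0].
Proof.
move=> a1 b1 c1 d1.
set W := cmul (cmul (cmul (cconj a) (cconj a)) (cconj a)) (cmul b (cmul c d)).
have W1 : sqnorm W = 1.
  by rewrite !sqnorm_cmul !sqnorm_cconj a1 b1 c1 d1 !mul1r.
have crossE mu : cross (cmul (cmul a (cmul mu a)) (cconj b))
                       (cmul (cmul c d) (cconj (cmul mu a))) =
    re W * (- (2 * re mu * im mu)) + im W * (re mu ^+ 2 - im mu ^+ 2).
  by rewrite /cross /W /cmul /cconj !cplxE; ring.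
clearbody W; move: W1; rewrite /sqnorm.
case: (eqVneq (im W) 0) => [W_re|W_im] W1.
  exists (cplx (3 / 5) (4 / 5)); split; rewrite ?crossE /sqnorm !cplxE //.
  - by field.
  - by apply/eqP; lra.
  - by apply/eqP => h; move: W1 h; rewrite W_re; nra.
exists e2; split; rewrite ?crossE /sqnorm !cplxE; first by ring.
  by rewrite oner_eq0.
by apply/eqP => h; move/eqP: W_im; apply; nra.
Qed.

Lemma cross0_vline a b : a != 0 -> cross a b = 0 -> b \in <[a]>%VS.
Proof.
move=> a_neq0 ab0; have a2_neq0 : sqnorm a != 0.
  apply: contraNneq a_neq0; rewrite /sqnorm => a2_0.
  by apply/eqP/row2P; rewrite /re /im in a2_0 *; rewrite !mxE; nra.
have -> : b = (inner b a / sqnorm a) *: a +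
              (cross a b / sqnorm a) *: cplx (- im a) (re a).
  rewrite /sqnorm /cross in a2_neq0 *.
  by apply: row2P; rewrite innerE !cplxE; field.
by rewrite ab0 mul0r scale0r addr0 memvZ // memv_line.
Qed.

Lemma span_cross_neq0 (I : finType) (x : I -> 'rV[R]_2) :
  <<[seq x i | i : I]>>%VS = fullv -> exists i j, cross (x i) (x j) != 0.
Proof.
move=> span_x; apply: contrapT => no_cross.
have [v x_line] : exists v, forall i, x i \in <[v]>%VS.
  have [[i0 xi0_neq0]|all0] := pselect (exists i, x i != 0).
    exists (x i0) => i; apply: cross0_vline => //; apply/eqP.
    by apply: contrapT => /negP ne; apply: no_cross; exists i0, i.
  exists 0 => i; rewrite (_ : x i = 0) ?mem0v //.
  by apply/eqP; apply: contrapT => /negP ne; apply: all0; exists i.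
have : (fullv <= <[v]>)%VS.
  by rewrite -span_x; apply/span_subvP => _ /mapP [i _ ->].
move/dimvS; rewrite dimvf dim_vline dim_matrix.
by case: (v != 0).
Qed.

Section Forms.
Variable k : nat.
Implicit Types (S : kform R k) (y z : 'I_k -> 'rV[R]_2) (i j l m : 'I_k).

Lemma upd_eq y i u : upd y i u i = u.
Proof. by rewrite /upd eqxx. Qed.

Lemma upd_neq y i j u : j != i -> upd y i u j = y j.
Proof. by rewrite /upd => /negbTE ->. Qed.

Lemma upd_id y i u : y i = u -> upd y i u = y.
Proof. by move=> <-; apply: funext => j; rewrite /upd; case: eqP => // ->. Qed.

Lemma updC y i j u v : i != j -> upd (upd y i u) j v = upd (upd y j v) i u.
Proof.
move=> /eqP ij; apply: funext => m; rewrite /upd.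
by do 2 case: eqP => //; move=> mi mj; case: ij; rewrite -mi -mj.
Qed.

Section Multilinear.
Variable S : kform R k.
Hypothesis S_ml : multilinear S.

Lemma form_upd0 y i : S (upd y i 0) = 0.
Proof. by have := S_ml y i 1 0 0; rewrite scaler0 addr0 mul1r; lra. Qed.

Lemma form_updZ y i s u : S (upd y i (s *: u)) = s * S (upd y i u).
Proof. by rewrite -[s *: u]addr0 S_ml form_upd0 addr0. Qed.

Lemma form_upd_comb y i s t u v :
  S (upd y i (s *: u + t *: v)) = s * S (upd y i u) + t * S (upd y i v).
Proof. by rewrite S_ml form_updZ. Qed.

Lemma form_upd_cplx y i u :
  S (upd y i u) = re u * S (upd y i e1) + im u * S (upd y i e2).
Proof. by rewrite {1}(cplx_basis u) form_upd_comb. Qed.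

Lemma form_upd_inner y i u :
  S (upd y i u) = inner u (cplx (S (upd y i e1)) (S (upd y i e2))).
Proof. by rewrite form_upd_cplx innerE !cplxE. Qed.

Hypothesis S_sym : Defs.symmetric_form S.

Lemma form_upd_swap y i j u v : i != j ->
  S (upd (upd y i u) j v) = S (upd (upd y i v) j u).
Proof.
move=> /eqP ij; rewrite -(S_sym (tperm i j)); congr S; apply: funext => m.
rewrite /upd; case: tpermP => [->|->|? ?]; repeat case: eqP => //.
all: congruence.
Qed.

End Multilinear.

Lemma unit_tuplesE z : unit_tuples z <-> forall l, sqnorm (z l) <= 1.
Proof. by split=> h l; [rewrite -vnorm_le1 | rewrite vnorm_le1]; apply: h. Qed.

Lemma ord_gt_of_ge_neq n (nk : (n < k)%N) m :
  (n <= m)%N -> m != Ordinal nk -> (n < m)%N.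
Proof.
move=> nm; apply: contraNT; rewrite -leqNgt => mn.
by apply/eqP/val_inj; apply/eqP; rewrite /= eqn_leq mn.
Qed.

Lemma abs_cplx_comb_le u X Y :
  sqnorm u <= 1 -> `|re u * X + im u * Y| <= `|X| + `|Y|.
Proof.
rewrite /sqnorm => u1; have le1 s : s ^+ 2 <= 1 -> `|s| <= 1.
  by move=> h; rewrite ler_norml; apply/andP; split; nra.
apply: le_trans (ler_normD _ _) _; rewrite !normrM.
by apply: lerD; apply: ler_piMl => //; apply: le1; nra.
Qed.

Definition basis_sum S :=
  \sum_(c : {ffun 'I_k -> bool}) `|S (fun l => if c l then e1 else e2)|.

(* Only needed to make the [sup] in [formnorm] meaningful, hence the crude
   constant. *)
Lemma form_bound_basis S : multilinear S -> forall n z,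
  (forall l, sqnorm (z l) <= 1) ->
  (forall l, (n <= l)%N -> z l = e1 \/ z l = e2) ->
  `|S z| <= basis_sum S * 2 ^+ n.
Proof.
move=> S_ml; have sum_ge0 : 0 <= basis_sum S by apply: sumr_ge0.
elim=> [|n IH] z z_le1 z_basis.
  have -> : z = (fun l => if [ffun l => z l == e1] l then e1 else e2).
    apply: funext => l; rewrite ffunE; case: eqP => // /eqP ne.
    by case: (z_basis l (leq0n _)) => // e; rewrite e eqxx in ne.
  rewrite expr0 mulr1 /basis_sum (bigD1 [ffun l => z l == e1]) //= lerDl.
  exact: sumr_ge0.
have [nk|kn] := ltnP n k; last first.
  apply: le_trans (IH z z_le1 _) _.
    by move=> l nl; have := ltn_ord l; rewrite ltnNge (leq_trans kn nl).
  by rewrite ler_wpM2l // exprS ler_peMl ?exprn_ge0 // ler1n.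
set l := Ordinal nk.
have IHl b : b = e1 \/ b = e2 -> `|S (upd z l b)| <= basis_sum S * 2 ^+ n.
  move=> hb; apply: IH => j; case: (eqVneq j l) => [->|jl].
  - by rewrite upd_eq /sqnorm; case: hb => ->; rewrite !cplxE; lra.
  - by rewrite upd_neq.
  - by rewrite upd_eq.
  - by move=> nj; rewrite upd_neq //; apply/z_basis/(ord_gt_of_ge_neq nj).
rewrite -(upd_id (erefl (z l))) form_upd_cplx //.
apply: le_trans (abs_cplx_comb_le _ _ (z_le1 l)) _.
rewrite exprS mulrCA mulr2n mulrDl !mul1r.
by apply: lerD; apply: IHl; [left|right].
Qed.

Lemma le_formnorm S z : multilinear S -> unit_tuples z -> `|S z| <= formnorm S.
Proof.
move=> S_ml z1; apply: ub_le_sup; last by exists z.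
exists (basis_sum S * 2 ^+ k) => _ [x /unit_tuplesE x1 <-].
apply: form_bound_basis => // l; have := ltn_ord l.
by rewrite ltnNge => /negP.
Qed.

Definition norm_le1 S := forall z, unit_tuples z -> `|S z| <= 1.

Lemma formnorm_le1 S : multilinear S -> formnorm S <= 1 -> norm_le1 S.
Proof. by move=> S_ml S1 z z1; apply: le_trans S1; apply: le_formnorm. Qed.

Definition sphere_tuple y := forall l, sqnorm (y l) = 1.

Definition pair_move y i j u :=
  upd (upd y i u) j (cmul (cmul (y i) (y j)) (cconj u)).

Lemma sphere_upd y i u :
  sphere_tuple y -> sqnorm u = 1 -> sphere_tuple (upd y i u).
Proof.
move=> y1 u1 j; case: (eqVneq j i) => [->|ji]; first by rewrite upd_eq.
by rewrite upd_neq.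
Qed.

Lemma sphere_pair_move y i j u :
  sphere_tuple y -> sqnorm u = 1 -> sphere_tuple (pair_move y i j u).
Proof.
move=> y1 u1; apply: sphere_upd; first exact: sphere_upd.
by rewrite !sqnorm_cmul sqnorm_cconj !y1 u1 !mul1r.
Qed.

Section Norming.
Variables (S : kform R k) (y : 'I_k -> 'rV[R]_2).
Hypotheses (S_Ls : Ls S) (S_le1 : norm_le1 S).
Hypotheses (y_unit : sphere_tuple y) (Sy : S y = 1).

Lemma norming_upd i v : S (upd y i v) = inner v (y i).
Proof.
have [S_ml _] := S_Ls.
rewrite form_upd_inner //; congr inner; apply: unit_dual_eq => // [|u u1].
  by rewrite -form_upd_inner // upd_id.
rewrite -form_upd_inner //; apply: le_trans (ler_norm _) (S_le1 _).
apply/unit_tuplesE => j; case: (eqVneq j i) => [->|ji]; first by rewrite upd_eq.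
by rewrite upd_neq // y_unit.
Qed.

(* Writing u = s y_i + t y_j, the values at u = y_i and u = y_j are known from
   [norming_upd] (the latter after a swap of slots). *)
Lemma norming_upd2 i j u v : i != j -> cross (y i) (y j) != 0 ->
  S (upd (upd y i u) j v) = inner v (cmul (cmul (y i) (y j)) (cconj u)).
Proof.
have [S_ml S_sym] := S_Ls; move=> ij yij.
rewrite updC // (cross_coord u yij) form_upd_comb //.
rewrite upd_id ?upd_neq // norming_upd.
rewrite -updC // form_upd_swap // upd_id ?upd_neq 1?eq_sym // norming_upd.
by rewrite cmul_cconj_comb !y_unit !mulr1 inner_combr.
Qed.

Lemma norming_pair_move i j u : i != j -> cross (y i) (y j) != 0 ->
  sqnorm u = 1 -> S (pair_move y i j u) = 1.
Proof.
move=> ij yij u1; rewrite norming_upd2 // inner_sqnorm.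
by rewrite !sqnorm_cmul sqnorm_cconj !y_unit u1 !mul1r.
Qed.

End Norming.

Lemma reach_slot y p q l b : sphere_tuple y -> p != q -> l != p -> l != q ->
  cross (y p) (y q) != 0 -> sqnorm b = 1 ->
  exists2 y', [/\ sphere_tuple y', cross (y' p) (y' q) != 0, y' l = b &
      forall m, m != l -> m != p -> m != q -> y' m = y m]
  & forall S, Ls S -> norm_le1 S -> S y = 1 -> S y' = 1.
Proof.
move=> y1 pq lp lq ypq b1.
(* First move (p, q) so that slot p holds mu y_l, independent of y_l; then
   move (l, p), which puts b in slot l. *)
have [mu [mu1 mu_im cross_neq0]] := exists_twist (y1 l) b1 (y1 p) (y1 q).
set rho := cmul mu (y l).
have rho1 : sqnorm rho = 1 by rewrite sqnorm_cmul mu1 y1 mul1r.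
set y2 := pair_move y p q rho.
have y2_unit : sphere_tuple y2 by apply: sphere_pair_move.
have y2l : y2 l = y l by rewrite /y2 /pair_move !upd_neq.
have y2p : y2 p = rho by rewrite /y2 /pair_move upd_neq // upd_eq.
have y2q : y2 q = cmul (cmul (y p) (y q)) (cconj rho).
  by rewrite /y2 /pair_move upd_eq.
have y2lp : cross (y2 l) (y2 p) != 0 by rewrite y2l y2p cross_cmulr y1 mulr1.
exists (pair_move y2 l p b).
  split; first exact: sphere_pair_move.
  - have [qp ql] : q != p /\ q != l by rewrite !(eq_sym q).
    by rewrite /pair_move upd_eq !upd_neq // y2l y2p y2q.
  - by rewrite /pair_move upd_neq // upd_eq.
  - by move=> m ml mp mq; rewrite /y2 /pair_move !upd_neq.
move=> S S_Ls S_le1 Sy.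
by apply: norming_pair_move => //; apply: norming_pair_move.
Qed.

Lemma norming_forms_agree S S' p q : Ls S -> Ls S' ->
  norm_le1 S -> norm_le1 S' -> p != q ->
  forall n y, sphere_tuple y -> S y = 1 -> S' y = 1 -> cross (y p) (y q) != 0 ->
  forall z, (forall m, (n <= m)%N -> m != p -> m != q -> z m = y m) ->
  S z = S' z.
Proof.
move=> S_Ls S'_Ls S_le1 S'_le1 pq.
elim=> [|n IH] y y1 Sy S'y ypq z zy.
  have -> : z = upd (upd y p (z p)) q (z q).
    apply: funext => m; rewrite /upd; case: eqP => [->|/eqP mq] //.
    by case: eqP => [->|/eqP mp] //; apply: zy.
  by rewrite !norming_upd2.
have [nk|kn] := ltnP n k; last first.
  apply: (IH y) => // m nm; have := ltn_ord m.
  by rewrite ltnNge (leq_trans kn nm).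
set l := Ordinal nk.
have [lpq|] := boolP ((l == p) || (l == q)).
  apply: (IH y) => // m nm mp mq; apply: zy => //.
  by apply: (ord_gt_of_ge_neq nm); rewrite -/l; case/orP: lpq => /eqP ->.
rewrite negb_or => /andP [lp lq].
have [[S_ml _] [S'_ml _]] := (S_Ls, S'_Ls).
suff agree b : sqnorm b = 1 -> S (upd z l b) = S' (upd z l b).
  rewrite -(upd_id (erefl (z l))) form_upd_cplx // [RHS]form_upd_cplx //.
  by rewrite !agree // /sqnorm !cplxE; ring.
move=> b1; have [y' [y'1 y'pq y'l y'_eq] y'_norming] :=
  reach_slot y1 pq lp lq ypq b1.
apply: (IH y') => //; try exact: y'_norming.
move=> m nm mp mq; case: (eqVneq m l) => [->|ml]; first by rewrite upd_eq.
by rewrite upd_neq // y'_eq // zy // (ord_gt_of_ge_neq nm).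
Qed.

Lemma norming_forms_eq S S' y : Ls S -> Ls S' -> norm_le1 S -> norm_le1 S' ->
  sphere_tuple y -> S y = 1 -> S' y = 1 ->
  (exists p q, cross (y p) (y q) != 0) -> S = S'.
Proof.
move=> S_Ls S'_Ls S_le1 S'_le1 y1 Sy S'y [p [q ypq]].
have pq : p != q by apply: contraNneq ypq => ->; rewrite /cross mulrC subrr.
apply: funext => z.
apply: (norming_forms_agree S_Ls S'_Ls S_le1 S'_le1 pq (n := k) y1 Sy S'y ypq).
by move=> m; rewrite leqNgt ltn_ord.
Qed.

Lemma Ls_scale c S : Ls S -> Ls (fun z => c * S z).
Proof.
by case=> S_ml S_sym; split=> [z i s u v | s z]; rewrite ?S_ml ?S_sym //; ring.
Qed.

Lemma norm_le1_scale c S :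
  `|c| = 1 -> norm_le1 S -> norm_le1 (fun z => c * S z).
Proof. by move=> c1 S_le1 z z1; rewrite normrM c1 mul1r S_le1. Qed.

End Forms.
End Plane.

Theorem proposition1p5 (R : realType) (k : nat) (T : kform R k)
  (x : 'I_k -> 'rV[R]_2) :
  (2 <= k)%N ->
  Ls T ->
  formnorm T = 1 ->
  (forall i, vnorm (x i) = 1) ->
  attains_norm_at T x ->
  (<<[seq x i | i : 'I_k]>>%VS = fullv) ->
  exposed_point T.
Proof.
move=> _ T_Ls T1 x1 Tx span_x.
have x_unit : sphere_tuple x by move=> i; apply: vnorm_eq1.
set eps := T x; have eps1 : `|eps| = 1 by rewrite /eps Tx T1.
have eps2 : eps * eps = 1.
  by rewrite -expr2 -real_normK ?num_real // eps1 expr1n.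
have phi_le (S : kform R k) : Ls S -> `|eps * S x| <= formnorm S.
  case=> S_ml _; rewrite normrM eps1 mul1r le_formnorm //.
  by apply/unit_tuplesE => i; rewrite x_unit.
have le1_scaled (S : kform R k) :
    Ls S -> formnorm S <= 1 -> norm_le1 (fun z => eps * S z).
  by case=> S_ml _ S1; apply/norm_le1_scale/formnorm_le1.
have T_le1 : formnorm T <= 1 by rewrite T1.
split=> //; split=> //.
exists (fun S => eps * S x); split; first by move=> a b S S' _ _; ring.
split; first by exists 1 => S /phi_le; rewrite mul1r.
move=> S S_Ls S1 S_neqT; rewrite eps2 lt_neqAle.
rewrite (le_trans (ler_norm _) (le_trans (phi_le _ S_Ls) S1)) andbT.
apply/eqP => phiS1; apply: S_neqT; apply: funext => z.
have := norming_forms_eq (Ls_scale eps S_Ls) (Ls_scale eps T_Ls)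
  (le1_scaled _ S_Ls S1) (le1_scaled _ T_Ls T_le1) x_unit phiS1 eps2
  (span_cross_neq0 span_x).
by move/(congr1 (fun f => eps * f z)) => /=; rewrite !mulrA eps2 !mul1r.
Qed.
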